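(* Let $\Bbbk$ be an algebraically closed field of characteristic $2$ and let $\mathfrak{u}(\mathfrak{m})$ be the algebra generated by $a,b,c$ with relations $ab+ba=c$, $ac+ca=a$, $bc+cb=b$, $a^4=b^4=0$, $c^2+c=0$. Then every two-dimensional $\mathfrak{u}(\mathfrak{m})$-module is trivial (i.e. $a,b,c$ act by $0$). Consequently $\dim \operatorname{Ext}^1_{\mathfrak{u}(\mathfrak{m})}(V_0,V_0)=0$, where $V_0$ is the one-dimensional module on which $a,b,c$ act by $0$. *)

From HB Require Import structures.
From mathcomp Require Import all_boot all_order all_algebra.
Set Implicit Arguments. Unset Strict Implicit. Unset Printing Implicit Defensive.
Import GRing.Theory.
Local Open Scope ring_scope.

(* A representation of u(m) on K^n (column vectors, left action):
   matrices A, B, C (actions of a, b, c) satisfying the defining relations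
   ab+ba=c, ac+ca=a, bc+cb=b, a^4=b^4=0, c^2+c=0. *)
Definition is_um_rep (K : fieldType) (n : nat) (A B C : 'M[K]_n) : Prop :=
  [/\ A *m B + B *m A = C,
      A *m C + C *m A = A,
      B *m C + C *m B = B
    & [/\ A *m A *m A *m A = 0,
      B *m B *m B *m B = 0
    & C *m C + C = 0]].

(* The module structure (A,B,C) on K^2 is an extension
   0 -> V0 -> K^2 -> V0 -> 0, where the submodule V0 is the line spanned by
   v != 0: a,b,c kill v, and act by zero on the quotient K^2 / <v>. *)
Definition is_ext_V0_V0 (K : fieldType) (A B C : 'M[K]_2) (v : 'cV[K]_2) : Prop :=
  [/\ v != 0,
      A *m v = 0, B *m v = 0, C *m v = 0
    & forall x : 'cV[K]_2, exists s t u : K,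
        [/\ A *m x = s *: v, B *m x = t *: v & C *m x = u *: v]].

(* Such an extension splits: there is a complement to <v> which is a
   submodule (necessarily isomorphic to V0, i.e. killed by a,b,c). *)
Definition ext_splits (K : fieldType) (A B C : 'M[K]_2) (v : 'cV[K]_2) : Prop :=
  exists w : 'cV[K]_2,
    [/\ \det (row_mx v w) != 0, A *m w = 0, B *m w = 0 & C *m w = 0].

From HB Require Import structures.
From mathcomp Require Import all_boot all_order all_algebra.

Set Implicit Arguments.
Unset Strict Implicit.
Unset Printing Implicit Defensive.
Import GRing.Theory.
Local Open Scope ring_scope.

(* In characteristic 2 the relation ab + ba = c makes c = ab - ba a
   commutator, so tr c = 0.  By Cayley-Hamilton a traceless 2x2 matrix
   squares to a scalar, hence so is c = -c^2; then a = ac + ca = 2ca = 0,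
   likewise b = 0, and c = ab + ba = 0.  Once a, b, c act by zero, every
   complement of the line V0 in a two-dimensional extension is a submodule. *)

Section Mx2.
Variable R : comNzRingType.

Lemma det_mx2 (M : 'M[R]_2) : \det M = M 0 0 * M 1 1 - M 0 1 * M 1 0.
Proof.
rewrite (expand_det_row _ 0) !big_ord_recl big_ord0 /cofactor !det_mx11 !mxE /=.
rewrite expr0 expr1 mul1r mulN1r addr0 mulrN.
congr (_ * _ - _ * _); congr (M _ _); exact/val_inj.
Qed.

Lemma mx2_Cayley_Hamilton (C : 'M[R]_2) : C *m C = \tr C *: C - (\det C)%:M.
Proof.
have := Cayley_Hamilton C.
rewrite -(coefK (char_poly C)) size_char_poly poly_def rmorph_sum.
rewrite !big_ord_recl big_ord0 /= !horner_mxZ !rmorphXn /= horner_mx_X.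
have c2 : (char_poly C)`_2 = 1.
  by have /monicP := char_poly_monic C; rewrite /lead_coef size_char_poly.
rewrite c2 char_poly_det (char_poly_trace C (isT : 0 < 2)%N) /bump /=.
rewrite addn0 addn1 expr0 expr1 expr2 mulrNN !mul1r scale1r addr0 scaleNr scalemx1.
by move/eqP; rewrite addrA addrC addr_eq0 opprB => /eqP.
Qed.

Lemma det_row_mx2 (v w : 'cV[R]_2) :
  \det (row_mx v w) = v 0 0 * w 1 0 - w 0 0 * v 1 0.
Proof.
rewrite det_mx2 !mxE.
case: splitP => j; rewrite (ord1 j) => // _.
by case: splitP => k; rewrite (ord1 k) => // _.
Qed.

End Mx2.

Section Pchar2.
Variables (R : comNzRingType) (n : nat).
Hypothesis pchar2_R : 2%N \in [pchar R].

Lemma mxtrace_anticomm_pchar2 (A B : 'M[R]_n) : \tr (A *m B + B *m A) = 0.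
Proof. by rewrite mxtraceD mxtrace_mulC (addrr_pchar2 pchar2_R). Qed.

Lemma anticomm_scalar_mx_pchar2 (A : 'M[R]_n) (c : R) :
  A *m c%:M + c%:M *m A = 0.
Proof.
by rewrite mul_mx_scalar mul_scalar_mx -scalerDl (addrr_pchar2 pchar2_R) scale0r.
Qed.

End Pchar2.

Lemma um_rep2_trivial (K : fieldType) (A B C : 'M[K]_2) :
  2%N \in [pchar K] -> is_um_rep A B C -> [/\ A = 0, B = 0 & C = 0].
Proof.
move=> pchar2_K [ABC ACA BCB [_ _ CCC]].
have trC : \tr C = 0 by rewrite -ABC mxtrace_anticomm_pchar2.
have sqrC : C *m C = - (\det C)%:M.
  by rewrite mx2_Cayley_Hamilton trC scale0r sub0r.
have C_scalar : C = (\det C)%:M by rewrite -[RHS]opprK -sqrC (addr0_eq CCC).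
have A0 : A = 0 by rewrite -ACA C_scalar anticomm_scalar_mx_pchar2.
have B0 : B = 0 by rewrite -BCB C_scalar anticomm_scalar_mx_pchar2.
by split=> //; rewrite -ABC A0 mul0mx mulmx0 addr0.
Qed.

Lemma exists_det_row_mx2_neq0 (K : fieldType) (v : 'cV[K]_2) :
  v != 0 -> exists w : 'cV[K]_2, \det (row_mx v w) != 0.
Proof.
move=> v_neq0; have [v0_eq0|v0_neq0] := eqVneq (v 0 0) 0; last first.
  by exists (\col_i (i == 1)%:R); rewrite det_row_mx2 !mxE mulr1 mul0r subr0.
exists (\col_i (i == 0)%:R).
rewrite det_row_mx2 !mxE v0_eq0 mul0r mul1r sub0r oppr_eq0.
apply: contra_neq v_neq0 => v1_eq0; apply/matrixP => i j; rewrite !mxE (ord1 j).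
by case: i => [[|[|//]] ?]; [rewrite -v0_eq0 | rewrite -v1_eq0]; congr (v _ _); exact/val_inj.
Qed.

Lemma ext_splits_trivial (K : fieldType) (v : 'cV[K]_2) :
  v != 0 -> ext_splits 0 0 0 v.
Proof.
by move=> /exists_det_row_mx2_neq0 [w det_neq0]; exists w; rewrite !mul0mx.
Qed.

Theorem lemma3p4 (K : closedFieldType) (hK : 2%N \in [pchar K]) :
  (forall A B C : 'M[K]_2, is_um_rep A B C -> [/\ A = 0, B = 0 & C = 0]) /\
  (forall (A B C : 'M[K]_2) (v : 'cV[K]_2),
      is_um_rep A B C -> is_ext_V0_V0 A B C v -> ext_splits A B C v).
Proof.
split=> [A B C|A B C v]; first exact: um_rep2_trivial.
move=> /(um_rep2_trivial hK) [-> -> ->] [v_neq0 _ _ _ _].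
exact: ext_splits_trivial.
Qed.
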